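(* Let $G$ be a directed graph with vertices $s,t$ and $k\ge1$. The function $\hat d_{\mathrm{cov}}:U^k_{\mathrm{lr}}\to\mathbb N$, $\hat d_{\mathrm{cov}}(C)=\sum_{e\in E_{\mathrm{shr}}(C)}(\mu_e(C)-1)$, is submodular on the lattice $L^*$, i.e. $\hat d_{\mathrm{cov}}(C_1\vee C_2)+\hat d_{\mathrm{cov}}(C_1\wedge C_2)\le\hat d_{\mathrm{cov}}(C_1)+\hat d_{\mathrm{cov}}(C_2)$ for all $C_1,C_2\in L^*$.
   Context: An $s$-$t$ cut of a directed graph $G$ is a set $X\subseteq E(G)$ such that removing $X$ leaves no directed $s$-$t$ path; $\Gamma_G(s,t)$ is the set of $s$-$t$ cuts of minimum cardinality. Fix a maximum-size collection $\mathcal P$ of pairwise edge-disjoint directed $s$-$t$ paths (each minimum $s$-$t$ cut contains exactly one edge of each path in $\mathcal P$). For $X,Y\in\Gamma_G(s,t)$, $S_{\min}(X\cup Y)$ (resp. $S_{\max}(X\cup Y)$) consists, for each $p\in\mathcal P$, of the edge of $(X\cup Y)\cap p$ occurring first (resp. last) along $p$. $X\le Y$ means every directed $s$-$t$ path meets an edge of $X$ at or before an edge of $Y$. $U^k_{\mathrm{lr}}$ is the set of $k$-tuples $[X_1,\dots,X_k]$ of elements of $\Gamma_G(s,t)$ with $X_i\le X_j$ for all $i<j$. $L^*$ is the lattice on $U^k_{\mathrm{lr}}$ with componentwise order, join $[X_i]_i\vee[Y_i]_i=[S_{\max}(X_i\cup Y_i)]_i$ and meet $[X_i]_i\wedge[Y_i]_i=[S_{\min}(X_i\cup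 Y_i)]_i$. For $C=[X_1,\dots,X_k]$, $\mu_e(C)$ is the number of indices $i$ with $e\in X_i$, and $E_{\mathrm{shr}}(C)=\{e\in E(G):\mu_e(C)\ge2\}$. *)

From mathcomp Require Import all_boot.
Set Implicit Arguments. Unset Strict Implicit. Unset Printing Implicit Defensive.

Section MinCuts.
Variables (V E : finType) (src tgt : E -> V) (s t : V).

Fixpoint dwalk (u v : V) (p : seq E) : bool :=
  match p with
  | [::] => u == v
  | e :: p' => (src e == u) && dwalk (tgt e) v p'
  end.

Definition st_path (p : seq E) : bool :=
  dwalk s t p && uniq (s :: map tgt p).

Definition st_cut (X : {set E}) : Prop :=
  forall p, st_path p -> has (fun e => e \in X) p.

Definition min_st_cut (X : {set E}) : Prop :=
  st_cut X /\ forall Y : {set E}, st_cut Y -> #|X| <= #|Y|.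

Definition edge_disjoint_paths (P : seq (seq E)) : Prop :=
  (forall p, p \in P -> st_path p) /\
  (forall i j, i < size P -> j < size P -> i != j ->
     forall e, e \in nth [::] P i -> e \notin nth [::] P j).

Definition max_edge_disjoint_paths (P : seq (seq E)) : Prop :=
  edge_disjoint_paths P /\
  forall Q, edge_disjoint_paths Q -> size Q <= size P.

Definition cut_le (X Y : {set E}) : Prop :=
  forall p, st_path p ->
    find (fun e => e \in X) p <= find (fun e => e \in Y) p.

Definition Smin (P : seq (seq E)) (Z : {set E}) : {set E} :=
  [set e | has (fun p => [&& e \in p, e \in Z &
              all (fun f => f \notin Z) (take (index e p) p)]) P].

Definition Smax (P : seq (seq E)) (Z : {set E}) : {set E} :=
  [set e | has (fun p => [&& e \in p, e \in Z &
              all (fun f => f \notin Z) (drop (index e p).+1 p)]) P].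

Definition in_Ulr (k : nat) (C : {ffun 'I_k -> {set E}}) : Prop :=
  (forall i, min_st_cut (C i)) /\
  (forall i j : 'I_k, i < j -> cut_le (C i) (C j)).

Definition Ljoin (P : seq (seq E)) k (C1 C2 : {ffun 'I_k -> {set E}})
  : {ffun 'I_k -> {set E}} := [ffun i => Smax P (C1 i :|: C2 i)].
Definition Lmeet (P : seq (seq E)) k (C1 C2 : {ffun 'I_k -> {set E}})
  : {ffun 'I_k -> {set E}} := [ffun i => Smin P (C1 i :|: C2 i)].

End MinCuts.

Definition mu (E : finType) k (C : {ffun 'I_k -> {set E}}) (e : E) : nat :=
  #|[set i : 'I_k | e \in C i]|.

Definition Eshr (E : finType) k (C : {ffun 'I_k -> {set E}}) : {set E} :=
  [set e | 2 <= mu C e].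

Definition dcov (E : finType) k (C : {ffun 'I_k -> {set E}}) : nat :=
  \sum_(e in Eshr C) (mu C e - 1).

From mathcomp Require Import all_boot ssralg ssrnum ssrint zify.
Set Implicit Arguments. Unset Strict Implicit. Unset Printing Implicit Defensive.
Import GRing.Theory Num.Theory.

(* Every minimum s-t cut X meets each path of P in exactly one edge.  Indeed X
   meets the |P| disjoint paths, and |X| <= |P| by the easy half of Menger's
   theorem: t is not reachable from s in the residual graph of P (otherwise
   augmenting along a residual walk and decomposing the result would yield
   |P| + 1 disjoint paths), so the edges leaving the reachable set form a cut,
   crossed at most once by each path of P.
   Hence, along a path p of P, a tuple C of L* is described by the positions
   a_i on p of the edges of its cuts, nondecreasing in i, and the join and meet
   take componentwise maxima and minima of these positions; edges off the paths
   of P lie in no component of a join or meet.  As d_cov C is the sum over all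
   edges e of mu_e(C) - 1 (truncated at 0), it suffices to compare, at a fixed
   position x, the numbers of indices i with max(a_i, b_i) = x, min(a_i, b_i) = x,
   a_i = x and b_i = x: the first two add up to the last two, and by
   monotonicity the first two are nonzero as soon as the last two are. *)

Definition path_edges (E : finType) (Q : seq (seq E)) : {set E} :=
  [set e | has (fun p => e \in p) Q].

Lemma path_edges_cons (E : finType) p (Q : seq (seq E)) :
  path_edges (p :: Q) = [set e in p] :|: path_edges Q.
Proof. by apply/setP => e; rewrite !inE. Qed.

Lemma connect_uniq_path (T : finType) (r : rel T) u v : connect r u v ->
  exists vs, [/\ path r u vs, uniq (u :: vs) & v = last u vs].
Proof.
by case/connectP => vs0 path_vs0 ->; case: (shortenP path_vs0) => vs; exists vs.
Qed.

(* [dwalk] over an arbitrary type of arcs, so that walks of the residual graph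
   are handled like walks of the graph. *)
Section GeneralWalks.
Variables (V : eqType) (T : Type) (st en : T -> V).
Local Open Scope ring_scope.

Fixpoint gwalk (u x : V) (ys : seq T) : bool :=
  if ys is y :: ys' then (st y == u) && gwalk (en y) x ys' else u == x.

Lemma gwalk_belast u x ys : gwalk u x ys -> map st ys = belast u (map en ys).
Proof. by elim: ys u => //= y ys IH u /andP[/eqP-> /IH ->]. Qed.

Lemma gwalk_sum u x ys v : gwalk u x ys ->
  \sum_(y <- ys) ((st y == v)%:Z - (en y == v)%:Z) = (u == v)%:Z - (x == v)%:Z.
Proof.
elim: ys u => [|y ys IH] u /=; first by move/eqP->; rewrite big_nil subrr.
by case/andP => /eqP <- /IH; rewrite big_cons => ->; lia.
Qed.

Lemma path_gwalk (ok : pred T) (r : rel V) :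
  (forall u v, r u v -> exists y, [/\ ok y, st y = u & en y = v]) ->
  forall u vs, path r u vs ->
  exists ys, [/\ all ok ys, map en ys = vs & gwalk u (last u vs) ys].
Proof.
move=> r_arc u vs; elim: vs u => [|v vs IH] u /=; first by exists [::]; rewrite /= eqxx.
case/andP => /r_arc[y [ok_y <- <-]] /IH[ys [ok_ys <- walk_ys]].
by exists (y :: ys); rewrite /= ok_y ok_ys walk_ys eqxx.
Qed.

End GeneralWalks.

Lemma sum_eqb_int (T : finType) (R : {set T}) a :
  (\sum_(v in R) (a == v)%:Z = (a \in R)%:Z)%R.
Proof.
case: (boolP (a \in R)) => aR; last first.
  by rewrite big1 // => v vR; case: eqP => // eq_av; rewrite eq_av vR in aR.
rewrite (bigD1 a) //= eqxx big1 ?addr0 // => v /andP[_ /negPf].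
by rewrite eq_sym => ->.
Qed.

Lemma sum_pos_le_size (T : eqType) (Q : seq T) (c : T -> nat) :
  {in Q, forall q, 0 < c q} -> \sum_(q <- Q) c q <= size Q -> {in Q, forall q, c q = 1}.
Proof.
move=> c_pos le_sum q qQ.
have : \sum_(r <- Q) (c r).-1 == 0.
  rewrite -leqn0 -(leq_add2l (size Q)) addn0; apply: leq_trans le_sum.
  rewrite -sum1_size -big_split /= !big_seq; apply: leq_sum => r rQ.
  by rewrite add1n prednK ?c_pos.
by rewrite sum_nat_seq_eq0 => /allP/(_ q qQ); have := c_pos q qQ; lia.
Qed.

Section Paths.
Variables (V E : finType) (src tgt : E -> V) (s t : V).
Local Notation edp := (edge_disjoint_paths src tgt s t).

Lemma dwalk_gwalk u x p : dwalk src tgt u x p = gwalk src tgt u x p.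
Proof. by elim: p u => //= e p IH u; rewrite IH. Qed.

Lemma st_cut_neq X : st_cut src tgt s t X -> s != t.
Proof.
move=> cutX; apply/eqP => eq_st.
by move: (cutX [::]); rewrite /st_path /= eq_st eqxx => /(_ isT).
Qed.

Lemma st_path_uniq p : st_path src tgt s t p -> uniq p.
Proof. by case/andP => _ /= /andP[_] /map_uniq. Qed.

Lemma edp_nil : edp [::].
Proof. by split=> [q|[]]. Qed.

Lemma edp_cons p Q : edp (p :: Q) <->
  [/\ st_path src tgt s t p, edp Q
    & forall q, q \in Q -> forall e, e \in p -> e \notin q].
Proof.
split=> [[p_st disj] | [p_st [Q_st disjQ] disj]].
  split; first by apply: p_st; rewrite mem_head.
    split=> [q qQ | i j]; first by apply: p_st; rewrite inE qQ orbT.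
    exact: (disj i.+1 j.+1).
  move=> q qQ e ep; rewrite -(nth_index [::] qQ).
  by apply: (disj 0 (index q Q).+1) => //=; rewrite ltnS index_mem.
split=> [q /predU1P[-> // | /Q_st] // | [|i] [|j] //= lt_i lt_j neq_ij e].
- by move=> ep; apply: disj => //; rewrite mem_nth.
- by apply: contraL => ep; apply: disj => //; rewrite mem_nth.
- exact: disjQ.
Qed.

Lemma edp_mem_eq Q p q e : edp Q -> p \in Q -> q \in Q -> e \in p -> e \in q -> p = q.
Proof.
case=> _ disj pQ qQ ep eq; apply: contraTeq ep => neq_pq.
rewrite -(nth_index [::] pQ) -(nth_index [::] qQ) in neq_pq eq *.
by apply: disj eq; rewrite ?index_mem //; apply: contra neq_pq => /eqP ->.
Qed.

End Paths.

Section Flows.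
Variables (V E : finType) (src tgt : E -> V) (s t : V).
Local Notation edp := (edge_disjoint_paths src tgt s t).
Local Open Scope ring_scope.

Definition incidence (e : E) (v : V) : int := (src e == v)%:Z - (tgt e == v)%:Z.
Definition outflow (F : {set E}) (v : V) : int := \sum_(e in F) incidence e v.
Definition st_flow (m : nat) (F : {set E}) : Prop :=
  forall v, outflow F v = m%:Z * ((s == v)%:Z - (t == v)%:Z).

Lemma st_path_incidence p v : st_path src tgt s t p ->
  \sum_(e <- p) incidence e v = (s == v)%:Z - (t == v)%:Z.
Proof. by case/andP; rewrite dwalk_gwalk => /(gwalk_sum v) <-. Qed.

Lemma outflow_seq p v : uniq p -> outflow [set e in p] v = \sum_(e <- p) incidence e v.
Proof. by move=> p_uniq; rewrite big_uniq //; apply: eq_bigl => e; rewrite inE. Qed.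

Lemma outflowU (A B : {set E}) v :
  [disjoint A & B] -> outflow (A :|: B) v = outflow A v + outflow B v.
Proof.
by move=> disAB; rewrite /outflow (eq_bigl [predU A & B]) ?bigU // => e; rewrite !inE.
Qed.

Lemma outflowD (A B : {set E}) v :
  B \subset A -> outflow (A :\: B) v = outflow A v - outflow B v.
Proof.
move=> sBA; rewrite -{2}(setID A B) (setIidPr sBA) outflowU.
  by rewrite addrC addKr.
by rewrite disjoints_subset setCD subsetUr.
Qed.

Lemma st_flow_path_edges Q : edp Q -> st_flow (size Q) (path_edges Q).
Proof.
elim: Q => [_ v | p Q IH /edp_cons[p_st edpQ disj] v].
  by rewrite /outflow big_pred0 ?mul0r // => e; rewrite inE.
rewrite path_edges_cons outflowU.
  rewrite IH // (outflow_seq _ (st_path_uniq p_st)) st_path_incidence //=.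
  by rewrite intS mulrDl mul1r.
rewrite disjoints_subset; apply/subsetP => e; rewrite !inE => ep.
by apply/hasPn => q qQ; apply: disj.
Qed.

Lemma outflow_closed_le0 (F : {set E}) (R : {set V}) :
  (forall e, e \in F -> src e \in R -> tgt e \in R) -> \sum_(v in R) outflow F v <= 0.
Proof.
move=> closedR; rewrite /outflow exchange_big /=; apply: sumr_le0 => e eF.
rewrite /incidence big_split /= sumrN !sum_eqb_int.
have [/(closedR e eF) -> | _] := boolP (src e \in R); first by rewrite subrr.
by case: (tgt e \in R).
Qed.

Lemma st_flow_path m F : s != t -> st_flow m.+1 F ->
  exists2 p, st_path src tgt s t p & {subset p <= F}.
Proof.
move=> neq_st flowF.
pose rF := [rel u v | [exists e in F, (src e == u) && (tgt e == v)]].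
have [/connect_uniq_path[vs [path_vs uniq_vs t_last]] | t_unreach] :=
  boolP (connect rF s t).
  have [xs [xsF tgt_xs walk_xs]] :
      exists xs, [/\ all (fun e => e \in F) xs, map tgt xs = vs
                   & gwalk src tgt s (last s vs) xs].
    apply: path_gwalk path_vs => u v /existsP[e /and3P[eF /eqP <- /eqP <-]].
    by exists e.
  exists xs; last exact/allP.
  by rewrite /st_path dwalk_gwalk tgt_xs {1}t_last walk_xs uniq_vs.
pose R := [set v | connect rF s v].
have : \sum_(v in R) outflow F v <= 0.
  apply: outflow_closed_le0 => e eF; rewrite !inE => /connect_trans; apply.
  by apply: connect1; apply/existsP; exists e; rewrite eF !eqxx.
rewrite (bigD1 s) ?inE ?connect0 //= big1 => [|v /andP[vR neq_vs]].
  by rewrite flowF eqxx [t == s]eq_sym (negPf neq_st) addr0 mulr1.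
have neq_tv : t != v by apply: contraNneq t_unreach => ->; rewrite inE in vR.
by rewrite flowF eq_sym (negPf neq_vs) (negPf neq_tv) subrr mulr0.
Qed.

Lemma st_flow_decomposition m F : s != t -> st_flow m F ->
  exists Q, [/\ edp Q, size Q = m & forall q, q \in Q -> {subset q <= F}].
Proof.
move=> neq_st; elim: m F => [|m IH] F flowF.
  by exists [::]; split=> //; apply: edp_nil.
have [p p_st pF] := st_flow_path neq_st flowF.
have flowFp : st_flow m (F :\: [set e in p]).
  move=> v; rewrite outflowD; last by apply/subsetP => e; rewrite inE => /pF.
  rewrite (outflow_seq _ (st_path_uniq p_st)) (st_path_incidence _ p_st) flowF.
  by rewrite intS mulrDl mul1r addrAC subrr add0r.
have [Q [edpQ <- QF]] := IH _ flowFp.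
exists (p :: Q); split => //.
  apply/edp_cons; split=> // q /QF qF e ep.
  by apply: contraTN ep => /qF; rewrite !inE => /andP[].
move=> q /predU1P[-> // | /QF qF e /qF].
by rewrite inE => /andP[].
Qed.

(* An arc [(e, true)] of the residual graph traverses [e] forwards, an arc
   [(e, false)] traverses it backwards. *)
Definition res_src (y : E * bool) : V := if y.2 then src y.1 else tgt y.1.
Definition res_tgt (y : E * bool) : V := if y.2 then tgt y.1 else src y.1.
Definition residual_arc (F : {set E}) (y : E * bool) : bool :=
  if y.2 then y.1 \notin F else y.1 \in F.
Definition residual (F : {set E}) : rel V :=
  [rel u v | [exists y, [&& residual_arc F y, res_src y == u & res_tgt y == v]]].
Definition arc_edges (b : bool) (ys : seq (E * bool)) : seq E :=
  [seq y.1 | y <- ys & y.2 == b].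

Lemma arc_edges_uniq b ys : uniq ys -> uniq (arc_edges b ys).
Proof.
move=> ys_uniq; rewrite map_inj_in_uniq ?filter_uniq // => -[e1 b1] [e2 b2].
by rewrite !mem_filter /= => /andP[/eqP-> _] /andP[/eqP-> _] ->.
Qed.

Lemma sum_res_incidence ys v :
  \sum_(y <- ys) ((res_src y == v)%:Z - (res_tgt y == v)%:Z) =
  \sum_(e <- arc_edges true ys) incidence e v -
  \sum_(e <- arc_edges false ys) incidence e v.
Proof.
elim: ys => [|[e []] ys IH]; first by rewrite !big_nil subrr.
all: by rewrite big_cons IH /arc_edges /= big_cons /incidence /res_src /res_tgt /=; lia.
Qed.

Lemma st_flow_augment m F ys : st_flow m F -> uniq ys ->
  all (residual_arc F) ys -> gwalk res_src res_tgt s t ys ->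
  st_flow m.+1 ((F :\: [set e in arc_edges false ys]) :|: [set e in arc_edges true ys]).
Proof.
move=> flowF ys_uniq /allP ys_arcs walk_ys v.
have arc_edgesP b e : e \in arc_edges b ys -> (e, b) \in ys.
  by case/mapP => -[e' b']; rewrite mem_filter /= => /andP[/eqP-> ?] ->.
rewrite outflowU; last first.
  rewrite disjoints_subset; apply/subsetP => e; rewrite !inE => /andP[_ eF].
  by apply: contraL eF => /arc_edgesP /ys_arcs.
rewrite outflowD; last first.
  by apply/subsetP => e; rewrite inE => /arc_edgesP /ys_arcs.
rewrite !outflow_seq ?arc_edges_uniq // flowF.
have := gwalk_sum v walk_ys; rewrite sum_res_incidence intS mulrDl mul1r.
by move=> <-; rewrite addrAC -addrA addrC.
Qed.

Lemma no_augmenting_walk P : s != t -> max_edge_disjoint_paths src tgt s t P ->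
  ~~ connect (residual (path_edges P)) s t.
Proof.
move=> neq_st [edpP maxP]; apply/negP.
case/connect_uniq_path => vs [path_vs uniq_vs t_last].
have [ys [arcs_ys tgt_ys walk_ys]] :
    exists ys, [/\ all (residual_arc (path_edges P)) ys, map res_tgt ys = vs
                 & gwalk res_src res_tgt s (last s vs) ys].
  apply: path_gwalk path_vs => u v /existsP[y /and3P[arc_y /eqP <- /eqP <-]].
  by exists y.
rewrite -t_last in walk_ys.
have uniq_ys : uniq ys.
  apply: (@map_uniq _ _ res_src); rewrite (gwalk_belast walk_ys) tgt_ys.
  by move: uniq_vs; rewrite lastI rcons_uniq => /andP[].
have flow_aug := st_flow_augment (st_flow_path_edges edpP) uniq_ys arcs_ys walk_ys.
have [Q [edpQ sizeQ _]] := st_flow_decomposition neq_st flow_aug.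
by have := maxP Q edpQ; rewrite sizeQ ltnn.
Qed.

End Flows.

Section MinCutBound.
Variables (V E : finType) (src tgt : E -> V) (s t : V).
Local Notation edp := (edge_disjoint_paths src tgt s t).

Definition out_edges (S : {set V}) : {set E} :=
  [set e | (src e \in S) && (tgt e \notin S)].

Lemma dwalk_out_edges (S : {set V}) u x p : u \in S -> x \notin S ->
  dwalk src tgt u x p -> has (fun e => e \in out_edges S) p.
Proof.
elim: p u => [|e p IH] u /= uS xNS.
  by move/eqP => eq_ux; rewrite -eq_ux uS in xNS.
case/andP => /eqP src_e walk_p; have [tgt_S | tgt_NS] := boolP (tgt e \in S).
  by rewrite (IH _ tgt_S xNS walk_p) orbT.
by rewrite inE src_e uS tgt_NS.
Qed.

Lemma out_edges_st_cut (S : {set V}) : s \in S -> t \notin S ->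
  st_cut src tgt s t (out_edges S).
Proof. by move=> sS tNS p /andP[walk_p _]; apply: dwalk_out_edges walk_p. Qed.

Definition reach (F : {set E}) : {set V} := [set v | connect (residual src tgt F) s v].

Lemma reach_fwd (F : {set E}) e : e \notin F -> src e \in reach F -> tgt e \in reach F.
Proof.
rewrite !inE => eNF /connect_trans; apply; apply: connect1.
by apply/existsP; exists (e, true); rewrite /residual_arc /= eNF !eqxx.
Qed.

Lemma reach_bwd (F : {set E}) e : e \in F -> tgt e \in reach F -> src e \in reach F.
Proof.
rewrite !inE => eF /connect_trans; apply; apply: connect1.
by apply/existsP; exists (e, false); rewrite /residual_arc /= eF !eqxx.
Qed.

Lemma out_edges_reach_sub (F : {set E}) : out_edges (reach F) \subset F.
Proof.
apply/subsetP => e; rewrite inE => /andP[src_S]; apply: contraNT => eNF.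
exact: reach_fwd.
Qed.

(* A walk inside [F] that has left [reach F] can never come back. *)
Lemma count_out_edges_reach (F : {set E}) u x q :
  {subset q <= F} -> dwalk src tgt u x q ->
  count (fun e => e \in out_edges (reach F)) q <= (u \in reach F).
Proof.
elim: q u => [|e q IH] u //= qF /andP[/eqP src_e walk_q].
have eF : e \in F by apply: qF; rewrite mem_head.
have {}IH : count (fun e => e \in out_edges (reach F)) q <= (tgt e \in reach F).
  by apply: IH walk_q => f fq; apply: qF; rewrite inE fq orbT.
rewrite inE -src_e; case: (boolP (src e \in reach F)) => [src_S | src_NS] /=.
  by case: (tgt e \in reach F) IH; case: count.
by have /negPf tgt_NS := contra (reach_bwd eF) src_NS; rewrite tgt_NS in IH *.
Qed.

Lemma card_setI_path_edges Q (X : {set E}) : edp Q ->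
  #|X :&: path_edges Q| = \sum_(p <- Q) #|X :&: [set e in p]|.
Proof.
elim: Q => [_ | p Q IH /edp_cons[_ edpQ disj]].
  by rewrite big_nil; apply/eqP; rewrite cards_eq0 -subset0; apply/subsetP => e;
    rewrite !inE andbF.
rewrite big_cons -IH // path_edges_cons setIUr cardsU.
suff -> : X :&: [set e in p] :&: (X :&: path_edges Q) = set0 by rewrite cards0 subn0.
apply/setP => e; rewrite !inE; apply/negP => /andP[/andP[_ ep] /andP[_ /hasP[q qQ eq]]].
by move: (disj q qQ e ep); rewrite eq.
Qed.

Lemma card_out_edges_reach P : edp P ->
  #|out_edges (reach (path_edges P))| <= size P.
Proof.
move=> edpP.
rewrite -(setIidPl (out_edges_reach_sub _)) card_setI_path_edges // -sum1_size.
rewrite !big_seq; apply: leq_sum => p pP.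
have [/andP[walk_p _] pF] : st_path src tgt s t p /\ {subset p <= path_edges P}.
  by split; [apply: edpP.1 | move=> e ep; rewrite inE; apply/hasP; exists p].
have count_le1 := leq_trans (count_out_edges_reach pF walk_p) (leq_b1 _).
apply: leq_trans count_le1.
rewrite -size_filter; apply: leq_trans (card_size _); apply: subset_leq_card.
by apply/subsetP => e; rewrite in_setI mem_filter => /andP[-> ]; rewrite inE.
Qed.

Lemma min_cut_card_le P X : max_edge_disjoint_paths src tgt s t P ->
  min_st_cut src tgt s t X -> #|X| <= size P.
Proof.
move=> [edpP maxP] [cutX minX]; have neq_st := st_cut_neq cutX.
apply: leq_trans (minX _ _) (card_out_edges_reach edpP).
apply: out_edges_st_cut; first by rewrite inE connect0.
by rewrite inE; apply: no_augmenting_walk.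
Qed.

End MinCutBound.

Definition cut_pos (E : finType) (p : seq E) (X : {set E}) : nat :=
  find (fun e => e \in X) p.

Lemma mem_drop_uniq (T : eqType) (p : seq T) n g : uniq p ->
  (g \in drop n p) = (g \in p) && (n <= index g p).
Proof.
move=> p_uniq; have [gp | gNp] := boolP (g \in p); last first.
  by apply: contraNF gNp => /mem_drop.
rewrite /= leqNgt -in_take //.
have := p_uniq; rewrite -{1}(cat_take_drop n p) cat_uniq => /and3P[_ /hasPn dis _].
move: gp; rewrite -{1}(cat_take_drop n p) mem_cat.
case: (boolP (g \in take n p)) => [g_take _ | _ /= -> //].
by apply: contraTF g_take => /dis.
Qed.

Section TwoPositions.
Variables (T : eqType) (p : seq T) (Z : pred T) (a b : nat).
Hypotheses (p_uniq : uniq p) (lt_a : a < size p) (lt_b : b < size p)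
  (Z_pos : {in p, forall g, Z g = (index g p == a) || (index g p == b)}).

Let Z_nth x0 c : c < size p -> Z (nth x0 p c) = (c == a) || (c == b).
Proof. by move=> lt_c; rewrite Z_pos ?mem_nth ?index_uniq. Qed.

Lemma last_of_two_positions e : e \in p ->
  Z e && all (fun g => ~~ Z g) (drop (index e p).+1 p) = (index e p == maxn a b).
Proof.
move=> ep; have all_drop n : all (fun g => ~~ Z g) (drop n p) = (a < n) && (b < n).
  apply/allP/andP => [Zdrop | [lt_an lt_bn] g].
    have Zdrop_nth c : c < size p -> (c == a) || (c == b) -> c < n.
      move=> lt_c Zc; rewrite ltnNge; apply: contraL Zc => le_nc.
      by rewrite -(Z_nth e lt_c) Zdrop // mem_drop_uniq ?mem_nth ?index_uniq.
    by rewrite !Zdrop_nth ?eqxx ?orbT.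
  by rewrite mem_drop_uniq // => /andP[gp le_n]; rewrite Z_pos //; lia.
by rewrite Z_pos // all_drop; lia.
Qed.

Lemma first_of_two_positions e : e \in p ->
  Z e && all (fun g => ~~ Z g) (take (index e p) p) = (index e p == minn a b).
Proof.
move=> ep; have all_take n : all (fun g => ~~ Z g) (take n p) = (n <= a) && (n <= b).
  apply/allP/andP => [Ztake | [le_na le_nb] g g_take].
    have Ztake_nth c : c < size p -> (c == a) || (c == b) -> n <= c.
      move=> lt_c Zc; rewrite leqNgt; apply: contraL Zc => lt_cn.
      by rewrite -(Z_nth e lt_c) Ztake // in_take ?mem_nth ?index_uniq.
    by rewrite !Ztake_nth ?eqxx ?orbT.
  have gp := mem_take g_take; move: g_take; rewrite in_take // => lt_n.
  by rewrite Z_pos //; lia.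
by rewrite Z_pos // all_take; lia.
Qed.

End TwoPositions.

Lemma Smax_sub_path_edges (E : finType) (P : seq (seq E)) (Z : {set E}) :
  Smax P Z \subset path_edges P.
Proof.
by apply/subsetP => e; rewrite !inE => /hasP[q qP /andP[eq _]]; apply/hasP; exists q.
Qed.

Lemma Smin_sub_path_edges (E : finType) (P : seq (seq E)) (Z : {set E}) :
  Smin P Z \subset path_edges P.
Proof.
by apply/subsetP => e; rewrite !inE => /hasP[q qP /andP[eq _]]; apply/hasP; exists q.
Qed.

Lemma mu_Ljoin_notin_path_edges (E : finType) P k (C1 C2 : {ffun 'I_k -> {set E}}) e :
  e \notin path_edges P -> mu (Ljoin P C1 C2) e = 0.
Proof.
move=> eNP; apply/eqP; rewrite cards_eq0 -subset0; apply/subsetP => i.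
by rewrite !inE ffunE => /(subsetP (Smax_sub_path_edges _ _)); rewrite (negPf eNP).
Qed.

Lemma mu_Lmeet_notin_path_edges (E : finType) P k (C1 C2 : {ffun 'I_k -> {set E}}) e :
  e \notin path_edges P -> mu (Lmeet P C1 C2) e = 0.
Proof.
move=> eNP; apply/eqP; rewrite cards_eq0 -subset0; apply/subsetP => i.
by rewrite !inE ffunE => /(subsetP (Smin_sub_path_edges _ _)); rewrite (negPf eNP).
Qed.

Section PathPositions.
Variables (V E : finType) (src tgt : E -> V) (s t : V).

Lemma cut_pos_mono k (C : {ffun 'I_k -> {set E}}) p :
  in_Ulr src tgt s t C -> st_path src tgt s t p ->
  forall i j : 'I_k, i <= j -> cut_pos p (C i) <= cut_pos p (C j).
Proof.
move=> [_ leC] p_st i j; rewrite leq_eqVlt => /predU1P[/val_inj -> // | lt_ij].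
exact: leC.
Qed.

Variable P : seq (seq E).
Hypothesis maxP : max_edge_disjoint_paths src tgt s t P.
Variable p : seq E.
Hypothesis pP : p \in P.

Let p_st : st_path src tgt s t p := maxP.1.1 p pP.

Lemma cut_pos_lt X : st_cut src tgt s t X -> cut_pos p X < size p.
Proof. by move=> cutX; rewrite -has_find; apply: cutX p_st. Qed.

Lemma min_cut_meets_path_once X : min_st_cut src tgt s t X -> #|X :&: [set e in p]| = 1.
Proof.
move=> minX; suff /(_ p pP) : {in P, forall q, #|X :&: [set e in q]| = 1} by [].
apply: sum_pos_le_size.
  move=> q qP; have /hasP[e eq eX] := minX.1 q (maxP.1.1 q qP).
  by apply/card_gt0P; exists e; rewrite !inE eX.
rewrite -(card_setI_path_edges _ maxP.1).
exact: leq_trans (subset_leq_card (subsetIl _ _)) (min_cut_card_le maxP minX).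
Qed.

Lemma min_cut_path_memE X g : min_st_cut src tgt s t X -> g \in p ->
  (g \in X) = (index g p == cut_pos p X).
Proof.
move=> minX gp; have lt_pos := cut_pos_lt minX.1.
have /cards1P[x Xp] : #|X :&: [set e in p]| == 1 by rewrite min_cut_meets_path_once.
have memXp f : f \in p -> (f \in X) = (f == x).
  by move=> fp; rewrite -in_set1 -Xp !inE fp andbT.
have : nth g p (cut_pos p X) \in X by apply: nth_find; apply: minX.1 p_st.
rewrite (memXp _ gp) memXp ?mem_nth // => /eqP <-.
apply/eqP/eqP => [-> | <-]; last by rewrite nth_index.
by rewrite index_uniq // (st_path_uniq p_st).
Qed.

Lemma mem_Smax_path (Z : {set E}) e : e \in p ->
  (e \in Smax P Z) = (e \in Z) && all (fun f => f \notin Z) (drop (index e p).+1 p).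
Proof.
move=> ep; rewrite inE; apply/hasP/andP => [[q qP /and3P[eq eZ Zdrop]] | [eZ Zdrop]].
  by have eq_pq := edp_mem_eq maxP.1 pP qP ep eq; subst q; rewrite eZ Zdrop.
by exists p => //; rewrite ep eZ Zdrop.
Qed.

Lemma mem_Smin_path (Z : {set E}) e : e \in p ->
  (e \in Smin P Z) = (e \in Z) && all (fun f => f \notin Z) (take (index e p) p).
Proof.
move=> ep; rewrite inE; apply/hasP/andP => [[q qP /and3P[eq eZ Ztake]] | [eZ Ztake]].
  by have eq_pq := edp_mem_eq maxP.1 pP qP ep eq; subst q; rewrite eZ Ztake.
by exists p => //; rewrite ep eZ Ztake.
Qed.

Section TwoMinCuts.
Variables X Y : {set E}.
Hypotheses (minX : min_st_cut src tgt s t X) (minY : min_st_cut src tgt s t Y).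

Let XY_pos : {in p, forall g,
  (g \in X :|: Y) = (index g p == cut_pos p X) || (index g p == cut_pos p Y)}.
Proof. by move=> g gp; rewrite inE !min_cut_path_memE. Qed.

Lemma mem_Smax_min_cuts e : e \in p ->
  (e \in Smax P (X :|: Y)) = (maxn (cut_pos p X) (cut_pos p Y) == index e p).
Proof.
move=> ep; rewrite mem_Smax_path // eq_sym.
exact: (last_of_two_positions (Z := fun g => g \in X :|: Y)
          (st_path_uniq p_st) (cut_pos_lt minX.1) (cut_pos_lt minY.1) XY_pos).
Qed.

Lemma mem_Smin_min_cuts e : e \in p ->
  (e \in Smin P (X :|: Y)) = (minn (cut_pos p X) (cut_pos p Y) == index e p).
Proof.
move=> ep; rewrite mem_Smin_path // eq_sym.
exact: (first_of_two_positions (Z := fun g => g \in X :|: Y)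
          (st_path_uniq p_st) (cut_pos_lt minX.1) (cut_pos_lt minY.1) XY_pos).
Qed.

End TwoMinCuts.

Variables (k : nat) (C1 C2 : {ffun 'I_k -> {set E}}) (e : E).
Hypotheses (minC1 : forall i, min_st_cut src tgt s t (C1 i))
  (minC2 : forall i, min_st_cut src tgt s t (C2 i)) (ep : e \in p).

Lemma mu_min_cuts_path (C : {ffun 'I_k -> {set E}}) :
  (forall i, min_st_cut src tgt s t (C i)) ->
  mu C e = #|[set i | cut_pos p (C i) == index e p]|.
Proof.
by move=> minC; apply: eq_card => i; rewrite !inE min_cut_path_memE // eq_sym.
Qed.

Lemma mu_Ljoin_path :
  mu (Ljoin P C1 C2) e =
  #|[set i | maxn (cut_pos p (C1 i)) (cut_pos p (C2 i)) == index e p]|.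
Proof. by apply: eq_card => i; rewrite !inE ffunE mem_Smax_min_cuts. Qed.

Lemma mu_Lmeet_path :
  mu (Lmeet P C1 C2) e =
  #|[set i | minn (cut_pos p (C1 i)) (cut_pos p (C2 i)) == index e p]|.
Proof. by apply: eq_card => i; rewrite !inE ffunE mem_Smin_min_cuts. Qed.

End PathPositions.

Lemma card_maxn_minn_eq (T : finType) (a b : T -> nat) x :
  #|[set i | maxn (a i) (b i) == x]| + #|[set i | minn (a i) (b i) == x]| =
  #|[set i | a i == x]| + #|[set i | b i == x]|.
Proof.
rewrite -cardsUI -[RHS]cardsUI; congr (_ + _); apply: eq_card => i;
  by rewrite !inE; case: leqP; rewrite 1?orbC 1?andbC.
Qed.

Lemma card_maxn_minn_pred_le k (a b : 'I_k -> nat) x :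
  (forall i j : 'I_k, i <= j -> a i <= a j) ->
  (forall i j : 'I_k, i <= j -> b i <= b j) ->
  #|[set i | maxn (a i) (b i) == x]|.-1 + #|[set i | minn (a i) (b i) == x]|.-1 <=
  #|[set i | a i == x]|.-1 + #|[set i | b i == x]|.-1.
Proof.
move=> mono_a mono_b; have := card_maxn_minn_eq a b x.
have [-> | /card_gt0P[i]] := posnP #|[set i | a i == x]|; first by lia.
have [-> | /card_gt0P[j]] := posnP #|[set i | b i == x]|; first by lia.
rewrite !inE => /eqP bj /eqP ai.
have [imax [imin [max_x min_x]]] :
    exists imax imin, maxn (a imax) (b imax) = x /\ minn (a imin) (b imin) = x.
  case: (leqP i j) => [le_ij | /ltnW le_ji].
    by exists i, j; have := mono_a _ _ le_ij; have := mono_b _ _ le_ij; lia.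
  by exists j, i; have := mono_a _ _ le_ji; have := mono_b _ _ le_ji; lia.
have : 0 < #|[set l | maxn (a l) (b l) == x]|.
  by apply/card_gt0P; exists imax; rewrite inE max_x.
have : 0 < #|[set l | minn (a l) (b l) == x]|.
  by apply/card_gt0P; exists imin; rewrite inE min_x.
lia.
Qed.

Lemma dcovE (E : finType) k (C : {ffun 'I_k -> {set E}}) :
  dcov C = \sum_e (mu C e).-1.
Proof.
rewrite /dcov /Eshr big_mkcond /=; apply: eq_bigr => e _; rewrite inE.
by case: ifP; case: (mu C e) => [|[]].
Qed.

Theorem theorem7 (V E : finType) (src tgt : E -> V) (s t : V) (k : nat)
  (P : seq (seq E)) :
  0 < k ->
  max_edge_disjoint_paths src tgt s t P ->
  forall C1 C2 : {ffun 'I_k -> {set E}},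
    in_Ulr src tgt s t C1 -> in_Ulr src tgt s t C2 ->
    dcov (Ljoin P C1 C2) + dcov (Lmeet P C1 C2) <= dcov C1 + dcov C2.
Proof.
move=> _ maxP C1 C2 UC1 UC2.
rewrite !dcovE -!big_split /=; apply: leq_sum => e _.
have [| eNP] := boolP (e \in path_edges P); last first.
  by rewrite mu_Ljoin_notin_path_edges ?mu_Lmeet_notin_path_edges.
rewrite inE => /hasP[p pP ep].
rewrite (mu_Ljoin_path maxP pP UC1.1 UC2.1 ep) (mu_Lmeet_path maxP pP UC1.1 UC2.1 ep).
rewrite (mu_min_cuts_path maxP pP ep UC1.1) (mu_min_cuts_path maxP pP ep UC2.1).
by apply: card_maxn_minn_pred_le; apply: cut_pos_mono (maxP.1.1 p pP).
Qed.
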